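(* Let $U_1,U_2,\dots$ be i.i.d. almost surely positive random variables distributed as $U$ with tail function $Q(x)=\mathbb{P}(U>x)$, and assume $\mathbb{E}[U^2]<\infty$ and that there exist $\beta\in(0,1/2)$ and $x_0>0$ in the interior of the support of $U$ such that $Q^{1/2-\beta}$ is convex on $[x_0,\infty)$. Let $V_1\le\dots\le V_N$ be the order statistics of $(U_1,\dots,U_N)$; conditionally on them let $(X_{i,j})_{1\le i<j\le N}$ be independent Bernoulli with $\mathbb{P}_V(X_{i,j}=1)=\frac{V_i}{V_i+V_j}$, $X_{j,i}=1-X_{i,j}$, $S_i=\sum_{j\ne i}X_{i,j}$ and $Z_N=\max_{1\le i\le N-1}S_i$. Let $\eta$ be a non-increasing deterministic function on $\mathbb{R}_+$ with $\lim_{+\infty}\eta=0$ such that $\mathbb{P}(B_N)\to1$, where $B_N=\{V_N/\sqrt N\le\eta(N)\}$, and let $C_N=\{\frac14\mathbb{E}[U]\le E_N(V)\le 2\mathbb{E}[U]\}$ with $E_N(V)=\frac1N\sum_{i=1}^{N-1}\frac{V_iV_{N-1}}{V_{N-1}+V_i}$. Then for $N$ large enough, on $B_N\cap C_N$, \[\mathbb{E}_V[Z_N]\le \sum_{i=1}^{N-1}\frac{V_{N-1}}{V_{N-1}+V_i}+\sqrt{8\,\mathbb{E}[U]\frac{N\log N}{V_{N-1}}}.\]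
   Context: $\mathbb{P}_V$ and $\mathbb{E}_V$ denote probability and expectation conditionally on $(V_1,\dots,V_N)$. *)

From HB Require Import structures.
From mathcomp Require Import all_boot all_order all_algebra.
From mathcomp Require Import all_classical all_reals all_analysis.
Set Implicit Arguments. Unset Strict Implicit. Unset Printing Implicit Defensive.
Import Order.TTheory GRing.Theory Num.Theory.
Import numFieldNormedType.Exports.
Local Open Scope classical_set_scope.
Local Open Scope ring_scope.

Section defs.
Context {d : measure_display} {T : measurableType d} {R : realType}.
Variable P : probability T R.

Definition mutually_independent (X : nat -> T -> R) : Prop :=
  forall (s : seq nat), uniq s ->
  forall (A : nat -> set R), (forall i, measurable (A i)) ->
  P (\bigcap_(i in [set` s]) (X i @^-1` A i)) =
  (\prod_(i <- s) P (X i @^-1` A i))%E.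

Definition identically_distributed (X : nat -> T -> R) : Prop :=
  forall n (A : set R), measurable A -> P (X n @^-1` A) = P (X 0%N @^-1` A).

Definition tail (U : T -> R) (x : R) : R := fine (P [set w | x < U w]).

Definition support (U : T -> R) : set R :=
  [set x | forall e : R, 0 < e -> (0%E < P [set w | (`|U w - x| < e)%R])%E].

Definition in_interior_support (U : T -> R) (x : R) : Prop :=
  exists2 e : R, 0 < e & forall y, `|y - x| < e -> support U y.
End defs.

Definition convex_on_halfline {R : realType} (f : R -> R) (a : R) : Prop :=
  forall x y t, a <= x -> a <= y -> 0 <= t <= 1 ->
    f (t * x + (1 - t) * y) <= t * f x + (1 - t) * f y.

(* k-th smallest (0-indexed) among u 0, ..., u (N-1): V_{k+1} in the paper. *)
Definition ordstat {R : realType} (N : nat) (u : nat -> R) (k : nat) : R :=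
  nth 0 (sort <=%R [seq u i | i <- iota 0 N]) k.

Section tournament.
Context {R : realType} (N : nat).
(* v : 'I_N -> R, v i = V_{i+1}. An outcome x records X_{i,j} for i < j
   (entries with ~~ (i < j) are required to be false). *)
Definition outcome_ok (x : {ffun 'I_N * 'I_N -> bool}) : bool :=
  [forall p : 'I_N * 'I_N, ~~ (p.1 < p.2)%N ==> ~~ x p].

Definition Xval (x : {ffun 'I_N * 'I_N -> bool}) (i j : 'I_N) : bool :=
  if (i < j)%N then x (i, j) else if (j < i)%N then ~~ x (j, i) else false.

Definition score (x : {ffun 'I_N * 'I_N -> bool}) (i : 'I_N) : R :=
  \sum_(j : 'I_N | j != i) (Xval x i j)%:R.

Definition Zmax (x : {ffun 'I_N * 'I_N -> bool}) : R :=
  \big[Num.max/0]_(i : 'I_N | (i < N.-1)%N) score x i.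

(* conditional probability of outcome x given V = v:
   independent Bernoulli with P(X_{i,j} = 1) = v_i / (v_i + v_j), i < j *)
Definition outcome_weight (v : 'I_N -> R) (x : {ffun 'I_N * 'I_N -> bool}) : R :=
  \prod_(p : 'I_N * 'I_N | (p.1 < p.2)%N)
    (if x p then v p.1 / (v p.1 + v p.2) else 1 - v p.1 / (v p.1 + v p.2)).

Definition cond_exp_Z (v : 'I_N -> R) : R :=
  \sum_(x : {ffun 'I_N * 'I_N -> bool} | outcome_ok x) outcome_weight v x * Zmax x.
End tournament.

From HB Require Import structures.
From mathcomp Require Import all_boot all_order all_algebra.
From mathcomp Require Import all_classical all_reals all_analysis.
From mathcomp Require Import ring lra zify.
Import Order.TTheory GRing.Theory Num.Theory.
Import numFieldNormedType.Exports.
Local Open Scope classical_set_scope.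
Local Open Scope ring_scope.
Set Implicit Arguments. Unset Strict Implicit. Unset Printing Implicit Defensive.

(* Given V, the score S_i is
   a sum of independent Bernoulli variables, so for lam <= 1/4 its moment
   generating function is at most exp (lam E S_i + lam^2 Var S_i). The
   exponent lam r + lam^2 r (1 - r) increases with the success probability r,
   so every S_i, i <= N - 1, is dominated by the profile of V_(N-1) playing
   everybody except V_N. Bounding e^(lam Z_N) by the sum of the e^(lam S_i)
   gives E_V[Z_N] <= sum_i V_(N-1) / (V_(N-1) + V_i) + ln N / lam + 2 lam sig,
   where sig = E[U] N / V_(N-1) bounds the variance on C_N; the choice
   lam = sqrt (ln N / (2 sig)) turns the last two terms into the square root.
   On B_N, V_(N-1) <= sqrt N, hence sig >= E[U] sqrt N >> ln N and lam <= 1/4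
   for N large. *)

Section exponential_bounds.
Context {R : realType}.
Implicit Types u r l lam : R.

Lemma expR_mul1B_le1 u : (1 - u) * expR u <= 1.
Proof.
have := ler_wpM2r (ltW (expR_gt0 u)) (expR_ge1Dx (- u)).
by rewrite -expRD addNr expR0 addrC.
Qed.

Lemma expR_le_quadratic u : u <= 1 / 4 -> expR u <= 1 + u + u ^+ 2.
Proof.
move=> u14; have [u0|u0] := leP u 0.
  have := expR_mul1B_le1 u; have := expR_gt0 u; nra.
(* square (1 - u/2) e^(u/2) <= 1 and use (1 + u + u^2) (1 - u/2)^2 >= 1 on [0, 1/4] *)
have c0 : 0 < 1 - u / 2 by lra.
have hb : expR (u / 2) <= (1 - u / 2)^-1.
  by rewrite -(ler_pM2l c0) mulfV ?gt_eqF //; apply: expR_mul1B_le1.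
have -> : expR u = expR (u / 2) ^+ 2 by rewrite expr2 -expRD; congr expR; lra.
apply: le_trans (_ : ((1 - u / 2)^-1) ^+ 2 <= _).
  by rewrite lerXn2r // nnegrE ?expR_ge0 // invr_ge0 ltW.
by rewrite exprVn -[_ ^- 2]mul1r ler_pdivrMr ?exprn_gt0 //; nra.
Qed.

Lemma bernoulli_mgf_le r l : 0 <= r <= 1 -> 0 <= l <= 1 / 4 ->
  r * expR l + (1 - r) <= expR (l * r + l ^+ 2 * (r * (1 - r))).
Proof.
move=> /andP[r0 r1] /andP[l0 l1].
have e1 := @expR_le_quadratic (l * (1 - r)) ltac:(nra).
have e2 := @expR_le_quadratic (- (l * r)) ltac:(nra).
have centred : r * expR (l * (1 - r)) + (1 - r) * expR (- (l * r))
    <= 1 + l ^+ 2 * (r * (1 - r)).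
  have := ler_wpM2l r0 e1; have := ler_wpM2l (_ : 0 <= 1 - r) e2.
  move=> /(_ ltac:(lra)) h2 h1; nra.
have -> : r * expR l + (1 - r) =
    expR (l * r) * (r * expR (l * (1 - r)) + (1 - r) * expR (- (l * r))).
  rewrite mulrDr !mulrA ![expR _ * _]mulrC -!mulrA -!expRD.
  by rewrite (_ : l * r + l * (1 - r) = l) ?addrN ?expR0 ?mulr1 //; ring.
rewrite expRD ler_wpM2l ?expR_ge0 //.
exact: le_trans centred (expR_ge1Dx _).
Qed.

Lemma drift_variance_mono lam r r' : 0 <= lam <= 1 / 2 -> 0 <= r -> r <= r' -> r' <= 1 ->
  lam * r + lam ^+ 2 * (r * (1 - r)) <= lam * r' + lam ^+ 2 * (r' * (1 - r')).
Proof.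
move=> /andP[l0 l1] r0 rr' r1; rewrite -subr_ge0.
have -> : lam * r' + lam ^+ 2 * (r' * (1 - r')) - (lam * r + lam ^+ 2 * (r * (1 - r)))
  = (r' - r) * (lam * (1 - lam) + lam ^+ 2 * (2 - r - r')) by ring.
by apply: mulr_ge0; [lra | apply: addr_ge0; apply: mulr_ge0; rewrite ?sqr_ge0; lra].
Qed.

End exponential_bounds.

Lemma sqrt_tradeoff {R : rcfType} (a b : R) : 0 < a -> 0 < b ->
  a / Num.sqrt (a / b) + Num.sqrt (a / b) * b = Num.sqrt (4 * (a * b)).
Proof.
move=> a0 b0; set s := Num.sqrt (a / b).
have s0 : 0 < s by rewrite sqrtr_gt0 divr_gt0.
have s2 : s ^+ 2 = a / b by rewrite sqr_sqrtr // ltW // divr_gt0.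
have lhs0 : 0 <= a / s + s * b by apply: addr_ge0; [apply: divr_ge0 | apply: mulr_ge0]; apply: ltW.
rewrite -(ger0_norm lhs0) -sqrtr_sqr; congr (Num.sqrt _).
rewrite sqrrD !exprMn exprVn s2.
by field; rewrite !gt_eqF.
Qed.

Lemma bigmax_le_sum_expR {R : realType} (I : finType) (P : pred I) (F : I -> R)
    (i0 : I) (l t : R) :
  P i0 -> (forall i, P i -> 0 <= F i) -> 0 < l ->
  \big[Num.max/0]_(i | P i) F i <= t + (\sum_(i | P i) expR (l * (F i - t)) - 1) / l.
Proof.
move=> Pi0 F0 l0; set S := \sum_(i | P i) _.
have term i : P i -> expR (l * (F i - t)) <= S.
  by move=> Pi; rewrite /S (bigD1 i) //= lerDl sumr_ge0 // => *; apply: expR_ge0.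
have hS : expR (l * (\big[Num.max/0]_(i | P i) F i - t)) <= S.
  apply: (big_ind (fun z => expR (l * (z - t)) <= S)); last exact: term.
  - by apply: le_trans (term _ Pi0); rewrite ler_expR ler_pM2l // lerD2r F0.
  - by move=> a b ha hb; rewrite maxEle; case: ifP.
have := expR_ge1Dx (l * (\big[Num.max/0]_(i | P i) F i - t)).
by rewrite -lerBlDl ler_pdivlMr //; nra.
Qed.

Section tournament.
Context {R : realType} (N : nat).
Notation outcome := {ffun 'I_N * 'I_N -> bool}.

Lemma sum_outcome_prod (h : 'I_N * 'I_N -> bool -> R) :
  \sum_(x : outcome | outcome_ok x) \prod_(p : 'I_N * 'I_N | (p.1 < p.2)%N) h p (x p)
  = \prod_(p : 'I_N * 'I_N | (p.1 < p.2)%N) (h p true + h p false).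
Proof.
under [RHS]eq_bigr do rewrite -big_bool.
rewrite (big_distr_big_dep false) /=; apply: eq_bigl => x.
apply/forallP/familyP => /= H p; have := H p;
  have -> : (p \in (fun i : 'I_N * 'I_N => (i.1 < i.2)%N)) = (p.1 < p.2)%N by [];
  by case: (p.1 < p.2)%N => //=; rewrite !inE; case: (x p).
Qed.

Lemma prod_pairs_incident (i : 'I_N) (G : 'I_N -> R) :
  \prod_(p : 'I_N * 'I_N | (p.1 < p.2)%N)
     (if p.1 == i then G p.2 else if p.2 == i then G p.1 else 1)
  = \prod_(j | j != i) G j.
Proof.
rewrite (bigID (fun p : 'I_N * 'I_N => (p.1 == i) || (p.2 == i))) /=.
rewrite [X in _ * X]big1 ?mulr1; last first.
  by move=> p /andP[_]; rewrite negb_or => /andP[/negbTE -> /negbTE ->].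
pose pair_with (j : 'I_N) := if (i < j)%N then (i, j) else (j, i).
pose other (p : 'I_N * 'I_N) := if p.1 == i then p.2 else p.1.
rewrite (reindex_onto pair_with other); last first.
  move=> [a b] /= /andP[ab /orP[/eqP ai|/eqP bi]]; rewrite /pair_with /other /=.
    by subst a; rewrite eqxx ab.
  subst b; have -> : (a == i) = false by apply/negbTE; rewrite neq_ltn ab.
  by rewrite ltnNge ltnW.
have neq_of_lt (j : 'I_N) : (j < i)%N -> (j == i) = false.
  by move=> ji; apply/eqP => E; move: ji; rewrite E ltnn.
apply: eq_big => [j|j _]; rewrite /pair_with /other;
  case: (ltngtP i j) => [ij|ji|/val_inj <-] /=; rewrite ?eqxx //.
- by rewrite ij neq_ltn ij orbT.
- by rewrite ji neq_of_lt // eqxx.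
- by rewrite ltnn.
- by rewrite neq_of_lt.
Qed.

Variables (v : 'I_N -> R) (v_gt0 : forall i, 0 < v i).

Definition win_prob a b := v a / (v a + v b).

Lemma win_prob_ge0 a b : 0 <= win_prob a b.
Proof. by rewrite divr_ge0 // ltW ?addr_gt0. Qed.

Lemma win_prob_le1 a b : win_prob a b <= 1.
Proof. by rewrite ler_pdivrMr ?addr_gt0 // mul1r lerDl ltW. Qed.

Lemma win_probC a b : 1 - win_prob a b = win_prob b a.
Proof.
have := v_gt0 a; have := v_gt0 b; rewrite /win_prob => vb va.
by rewrite [v b + _]addrC; field; rewrite gt_eqF ?addr_gt0.
Qed.

Lemma win_prob_homo_l a a' b : v a <= v a' -> win_prob a b <= win_prob a' b.
Proof.
have := v_gt0 a; have := v_gt0 a'; have := v_gt0 b; rewrite /win_prob => vb va' va h.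
rewrite ler_pdivrMr ?addr_gt0 // mulrAC ler_pdivlMr ?addr_gt0 //; nra.
Qed.

Lemma win_prob_homo_r a b b' : v b <= v b' -> win_prob a b' <= win_prob a b.
Proof.
have := v_gt0 a; have := v_gt0 b; have := v_gt0 b'; rewrite /win_prob => vb' vb va h.
rewrite ler_pdivrMr ?addr_gt0 // mulrAC ler_pdivlMr ?addr_gt0 //; nra.
Qed.

Lemma win_prob_variance_le a b : win_prob a b * (1 - win_prob a b) <= win_prob b a.
Proof. by rewrite win_probC ler_piMl ?win_prob_ge0 ?win_prob_le1. Qed.

Lemma outcome_weight_ge0 x : 0 <= outcome_weight v x.
Proof.
apply: prodr_ge0 => p _; have := win_prob_le1 p.1 p.2.
by case: (x p); rewrite ?subr_ge0 // => _; apply: win_prob_ge0.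
Qed.

Lemma sum_outcome_weight : \sum_(x : outcome | outcome_ok x) outcome_weight v x = 1.
Proof.
rewrite /outcome_weight (sum_outcome_prod (fun p (b : bool) =>
  if b then win_prob p.1 p.2 else 1 - win_prob p.1 p.2)).
by apply: big1 => p _; rewrite addrC subrK.
Qed.

Definition score_exponent (lam : R) a j :=
  lam * win_prob a j + lam ^+ 2 * (win_prob a j * (1 - win_prob a j)).

(* Weight and e^(lam S_i) both factor over the pairs, so the sum over outcomes
   is a product of Bernoulli moment generating functions. *)
Lemma score_mgf_le i lam : 0 <= lam <= 1 / 4 ->
  \sum_(x : outcome | outcome_ok x) outcome_weight v x * expR (lam * score x i)
  <= expR (\sum_(j | j != i) score_exponent lam i j).
Proof.
move=> hlam.
pose q (p : 'I_N * 'I_N) (b : bool) :=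
  if b then win_prob p.1 p.2 else 1 - win_prob p.1 p.2.
pose h (p : 'I_N * 'I_N) (b : bool) :=
  if p.1 == i then expR (lam * b%:R) else if p.2 == i then expR (lam * (~~ b)%:R) else 1.
have factor x : outcome_weight v x * expR (lam * score x i) =
    \prod_(p : 'I_N * 'I_N | (p.1 < p.2)%N) (q p (x p) * h p (x p)).
  rewrite big_split /=; congr (_ * _); rewrite /score mulr_sumr expR_sum.
  rewrite -(prod_pairs_incident i (fun j => expR (lam * (Xval x i j)%:R))).
  apply: eq_bigr => -[a b] /= ab; rewrite /h /=.
  have [<-|ai] := eqVneq a i; first by rewrite /Xval ab.
  have [<-|//] := eqVneq b i.
  by rewrite /Xval ltnNge (ltnW ab) /= ab.
rewrite (eq_bigr _ (fun x _ => factor x)) (sum_outcome_prod (fun p b => q p b * h p b)).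
rewrite expR_sum -(prod_pairs_incident i (fun j => expR (score_exponent lam i j))).
apply: ler_prod => -[a b] /= ab; apply/andP; split.
  apply: addr_ge0; apply: mulr_ge0; rewrite /q /h /=;
    rewrite ?win_prob_ge0 ?subr_ge0 ?win_prob_le1 //;
    by do 2?case: ifP => _; rewrite ?expR_ge0.
rewrite /h /q /=.
have [<-|ai] := eqVneq a i.
  rewrite ?eqxx mulr1 mulr0 expR0 mulr1.
  by apply: bernoulli_mgf_le; rewrite ?win_prob_ge0 ?win_prob_le1.
have [<-|bi] := eqVneq b i; last by rewrite !mulr1 addrC subrK.
rewrite ?eqxx mulr1 mulr0 expR0 mulr1 win_probC -(win_probC b a) addrC.
by apply: bernoulli_mgf_le; rewrite ?win_prob_ge0 ?win_prob_le1.
Qed.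

Lemma score_exponent_le (i m l : 'I_N) lam : 0 <= lam <= 1 / 2 ->
  v i <= v m -> v i <= v l ->
  \sum_(j | j != i) score_exponent lam i j <= \sum_(j | j != l) score_exponent lam m j.
Proof.
move=> hlam vim vil; apply: (@le_trans _ _ (\sum_(j | j != i) score_exponent lam m j)).
  apply: ler_sum => j _; apply: drift_variance_mono;
    by rewrite ?win_prob_ge0 ?win_prob_le1 ?win_prob_homo_l.
have split_at k : \sum_j score_exponent lam m j
    = score_exponent lam m k + \sum_(j | j != k) score_exponent lam m j.
  by rewrite (bigD1 k).
have := split_at i; have := split_at l.
have := drift_variance_mono hlam (win_prob_ge0 m l) (win_prob_homo_r m vil) (win_prob_le1 m i).
rewrite /score_exponent /=; lra.
Qed.

Lemma cond_exp_Z_le_of_mgf lam t : (1 < N)%N -> 0 < lam ->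
  (forall i : 'I_N, (i < N.-1)%N ->
    \sum_(x : outcome | outcome_ok x) outcome_weight v x * expR (lam * score x i)
    <= expR (lam * t) / N%:R) ->
  cond_exp_Z v <= t.
Proof.
move=> N1 lam0 mgf_le.
have N0 : (0 < N)%N by apply: ltn_trans N1.
pose A x := \sum_(i : 'I_N | (i < N.-1)%N) expR (lam * (score x i - t)).
have Zmax_le x : Zmax x <= t + (A x - 1) / lam.
  rewrite /Zmax /A; apply: (@bigmax_le_sum_expR _ _ (fun i : 'I_N => (i < N.-1)%N)
    (score x) (Ordinal N0)) => //= [|i _]; first by move: N1; clear; lia.
  by apply: sumr_ge0 => j _; apply: ler0n.
have mean_A : \sum_(x : outcome | outcome_ok x) outcome_weight v x * A x <= 1.
  rewrite /A; under eq_bigr do rewrite mulr_sumr; rewrite exchange_big /=.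
  apply: (@le_trans _ _ (\sum_(i < N | (i < N.-1)%N) N%:R^-1)).
    apply: ler_sum => i hi.
    under eq_bigr do rewrite mulrBr expRD mulrA.
    rewrite -mulr_suml; apply: le_trans (ler_wpM2r (expR_ge0 _) (mgf_le i hi)) _.
    by rewrite mulrAC -expRD addrN expR0 mul1r.
  apply: (@le_trans _ _ (\sum_(i < N) N%:R^-1)).
    by rewrite [X in X <= _]big_mkcond /= ler_sum // => i _; case: ifP; rewrite ?invr_ge0.
  by rewrite sumr_const card_ord -[_ *+ N]mulr_natr mulVf // pnatr_eq0 -lt0n.
apply: (@le_trans _ _ (\sum_(x : outcome | outcome_ok x)
    outcome_weight v x * (t + (A x - 1) / lam))).
  by apply: ler_sum => x _; rewrite ler_wpM2l ?outcome_weight_ge0.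
have -> : \sum_(x : outcome | outcome_ok x) outcome_weight v x * (t + (A x - 1) / lam)
    = t * \sum_(x : outcome | outcome_ok x) outcome_weight v x
      + (\sum_(x : outcome | outcome_ok x) outcome_weight v x * A x
         - \sum_(x : outcome | outcome_ok x) outcome_weight v x) / lam.
  rewrite -sumrB mulr_suml mulr_sumr -big_split /=.
  by apply: eq_bigr => x _; field; rewrite gt_eqF.
rewrite sum_outcome_weight mulr1 gerDl pmulr_lle0 ?invr_gt0 //; lra.
Qed.

Theorem cond_exp_Z_le (m l : 'I_N) lam : (1 < N)%N -> (l : nat) = N.-1 ->
  (forall i : 'I_N, (i < N.-1)%N -> v i <= v m) -> (forall i, v i <= v l) ->
  0 < lam <= 1 / 4 ->
  cond_exp_Z v <= \sum_(j : 'I_N | (j < N.-1)%N) win_prob m j + ln N%:R / lam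
    + lam * \sum_(j : 'I_N | (j < N.-1)%N) (win_prob m j * (1 - win_prob m j)).
Proof.
move=> N1 lE vm vl /andP[lam0 lam_le].
set M := \sum_(j | _) win_prob m j; set W := \sum_(j | _) (_ * _).
have lam_14 : 0 <= lam <= 1 / 4 by rewrite ltW.
have lam_12 : 0 <= lam <= 1 / 2 by apply/andP; split; lra.
apply: (@cond_exp_Z_le_of_mgf lam) => // i hi.
apply: le_trans (score_mgf_le i lam_14) _.
have N0 : 0 < N%:R :> R by rewrite ltr0n; apply: ltn_trans N1.
have -> : lam * (M + ln N%:R / lam + lam * W) = lam * M + lam ^+ 2 * W + ln N%:R.
  by field; rewrite gt_eqF.
rewrite expRD lnK ?posrE // mulfK ?gt_eqF // ler_expR.
apply: le_trans (score_exponent_le lam_12 (vm i hi) (vl i)) _.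
have last_ltn j : (j != l) = (j < N.-1)%N :> bool.
  by rewrite -(inj_eq val_inj) /= lE; have := ltn_ord j; case: ltngtP => // ? ?; lia.
by rewrite (eq_bigl _ _ last_ltn) big_split /= /M /W !mulr_sumr.
Qed.

Theorem cond_exp_Z_le_sqrt (m l : 'I_N) (EU : R) : (1 < N)%N -> (l : nat) = N.-1 ->
  (forall i : 'I_N, (i < N.-1)%N -> v i <= v m) -> (forall i, v i <= v l) ->
  0 < EU -> v l <= Num.sqrt N%:R -> 8 * ln N%:R <= EU * Num.sqrt N%:R ->
  \sum_(j : 'I_N | (j < N.-1)%N) (v j * v m / (v m + v j)) <= 2 * EU * N%:R ->
  cond_exp_Z v <= \sum_(j : 'I_N | (j < N.-1)%N) win_prob m j
    + Num.sqrt (8 * EU * (N%:R * ln N%:R / v m)).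
Proof.
move=> N1 lE vm vl EU0 vl_le ln_le mean_le.
have vm0 := v_gt0 m; have N0 : 0 < N%:R :> R by rewrite ltr0n; apply: ltn_trans N1.
have sqN0 : 0 < Num.sqrt N%:R :> R by rewrite sqrtr_gt0.
have L0 : 0 < ln N%:R :> R by rewrite ln_gt0 // ltr1n.
set L := ln N%:R in L0 ln_le *; set sig := EU * N%:R / v m.
have sig_ge : EU * Num.sqrt N%:R <= sig.
  rewrite /sig -mulrA ler_pM2l // ler_pdivlMr // -{2}(@sqr_sqrtr _ N%:R (ltW N0)).
  by rewrite expr2 ler_pM2l // (le_trans (vl m)).
have var_le : \sum_(j : 'I_N | (j < N.-1)%N) (win_prob m j * (1 - win_prob m j)) <= 2 * sig.
  apply: (@le_trans _ _ (\sum_(j : 'I_N | (j < N.-1)%N) win_prob j m)).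
    by apply: ler_sum => j _; apply: win_prob_variance_le.
  rewrite /sig !mulrA ler_pdivlMr // mulr_suml; apply: le_trans _ mean_le.
  apply: ler_sum => j _; rewrite /win_prob [v m + _]addrC.
  by rewrite le_eqVlt; apply/orP; left; apply/eqP; field; rewrite gt_eqF ?addr_gt0.
have sig0 : 0 < sig by rewrite divr_gt0 ?mulr_gt0.
have sig2 : 0 < 2 * sig by lra.
have ratio0 : 0 < L / (2 * sig) by rewrite divr_gt0.
(* lam balances ln N / lam against 2 lam sig *)
set lam := Num.sqrt (L / (2 * sig)).
have lam0 : 0 < lam by rewrite sqrtr_gt0.
have lam14 : lam <= 1 / 4.
  have lam2 : lam ^+ 2 * (2 * sig) = L by rewrite sqr_sqrtr ?ltW // divfK ?gt_eqF.
  have : lam ^+ 2 <= 1 / 16 by rewrite -(ler_pM2r sig2) lam2; lra.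
  nra.
have lam_range : 0 < lam <= 1 / 4 by rewrite lam0.
apply: le_trans (cond_exp_Z_le N1 lE vm vl lam_range) _.
rewrite -addrA lerD2l; apply: le_trans (_ : _ <= L / lam + lam * (2 * sig)) _.
  by rewrite lerD2l ler_pM2l.
rewrite sqrt_tradeoff //.
by rewrite le_eqVlt; apply/orP; left; apply/eqP; congr (Num.sqrt _); rewrite /sig; ring.
Qed.
End tournament.

Section order_statistics.
Context {R : realType}.

Lemma ordstat_le N (u : nat -> R) i j : (i <= j)%N -> (j < N)%N ->
  ordstat N u i <= ordstat N u j.
Proof.
move=> ij jN; apply: (sorted_leq_nth le_trans lexx); first exact/sort_sorted/le_total.
- by rewrite inE size_sort size_map size_iota (leq_ltn_trans ij).
- by rewrite inE size_sort size_map size_iota.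
- exact: ij.
Qed.

Lemma ordstat_gt0 N (u : nat -> R) k : (forall i, (i < N)%N -> 0 < u i) -> (k < N)%N ->
  0 < ordstat N u k.
Proof.
move=> u_gt0 kN; have : ordstat N u k \in [seq u i | i <- iota 0 N].
  by rewrite -(mem_sort <=%R) mem_nth // size_sort size_map size_iota.
by case/mapP => i; rewrite mem_iota add0n => /andP[_ iN] ->; apply: u_gt0.
Qed.

Lemma big_nat1_ord N (F : nat -> R) : (0 < N)%N ->
  \sum_(1 <= i < N) F i = \sum_(j : 'I_N | (j < N.-1)%N) F j.+1.
Proof.
move=> N0; rewrite big_add1 big_mkord.
by rewrite (big_ord_widen _ (fun j => F j.+1) (leq_pred N)).
Qed.

Lemma pair_mean_gt0 N (V : nat -> R) : (1 < N)%N ->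
  (forall k, (0 < k < N)%N -> 0 < V k) ->
  0 < N%:R^-1 * \sum_(1 <= i < N) (V i * V N.-1 / (V N.-1 + V i)).
Proof.
move=> N1 V_gt0; have VN : 0 < V N.-1 by apply: V_gt0; move: N1; clear; lia.
have term_gt0 i : (0 < i < N)%N -> 0 < V i * V N.-1 / (V N.-1 + V i).
  by move=> /V_gt0 Vi; rewrite divr_gt0 ?mulr_gt0 ?addr_gt0.
rewrite mulr_gt0 ?invr_gt0 ?ltr0n ?(ltn_trans _ N1) // big_ltn //.
rewrite ltr_wpDr ?term_gt0 // big_nat_cond sumr_ge0 // => i /andP[/andP[i2 iN] _].
by rewrite ltW // term_gt0 // iN (leq_trans _ i2).
Qed.

Lemma ordstat_cond_exp_Z_le N (u : nat -> R) (EU : R) :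
  (1 < N)%N -> (forall i, (i < N)%N -> 0 < u i) -> 0 < EU ->
  let V k := ordstat N u k.-1 in
  V N <= Num.sqrt N%:R -> ln N%:R <= EU / 8 * Num.sqrt N%:R ->
  N%:R^-1 * \sum_(1 <= i < N) (V i * V N.-1 / (V N.-1 + V i)) <= 2 * EU ->
  cond_exp_Z (fun i : 'I_N => V i.+1) <=
    \sum_(1 <= i < N) (V N.-1 / (V N.-1 + V i))
    + Num.sqrt (8 * EU * (N%:R * ln N%:R / V N.-1)).
Proof.
move=> N1 u_gt0 EU0 V VN ln_le mean_le.
have N0 : (0 < N)%N by apply: ltn_trans N1.
have m_lt : (N.-2 < N)%N by move: N1; clear; lia.
have l_lt : (N.-1 < N)%N by move: N1; clear; lia.
rewrite !big_nat1_ord // in mean_le *.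
apply: (@cond_exp_Z_le_sqrt _ _ _ _ (Ordinal m_lt) (Ordinal l_lt)) => //=.
- by move=> i; apply: ordstat_gt0 u_gt0 (ltn_ord i).
- by move=> i hi; apply: ordstat_le m_lt; move: hi; clear; lia.
- by move=> i; apply: ordstat_le l_lt; have := ltn_ord i; clear; lia.
- by move: ln_le; rewrite mulrAC ler_pdivlMr // mulrC.
- by move: mean_le; rewrite mulrC ler_pdivrMr ?ltr0n.
Qed.

Lemma near_ln_le_sqrt (c : R) : 0 < c ->
  \forall N \near \oo, ln (N%:R : R) <= c * Num.sqrt N%:R.
Proof.
move=> c0; near=> N.
have N0 : 0 < N%:R :> R by rewrite ltr0n; near: N; exact: nbhs_infty_gt.
set y := Num.sqrt (Num.sqrt (N%:R : R)).
have y0 : 0 < y by rewrite !sqrtr_gt0.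
have y2 : y ^+ 2 = Num.sqrt N%:R by rewrite sqr_sqrtr // ltW // sqrtr_gt0.
have y4 : y ^+ 4 = N%:R by rewrite -[4%N]/(2 * 2)%N exprM y2 sqr_sqrtr // ltW.
(* ln N = 4 ln y < 4 y, and 4 y <= c y^2 once y >= 4 / c *)
have yc : 4 <= c * y.
  have c4 : 0 <= c^-1 * 4 by rewrite mulr_ge0 // invr_ge0 ltW.
  rewrite -ler_pdivrMl // -(@ler_pXn2r _ 4) ?nnegrE ?(ltW y0) // y4.
  by near: N; apply: nbhs_infty_ger.
rewrite -y2 -y4 lnXn.
have := ln_sublinear y0; have := mulr_ge0 (ltW y0) (_ : 0 <= c * y - 4).
by rewrite subr_ge0 => /(_ yc); nra.
Unshelve. all: by end_near.
Qed.

End order_statistics.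

Lemma near_forall_ltn {T : Type} (F : set_system T) (Q : nat -> T -> Prop) :
  Filter F -> (forall n, \forall x \near F, Q n x) ->
  forall n, \forall x \near F, forall i, (i < n)%N -> Q i x.
Proof.
move=> FF FQ; elim=> [|n IH]; first by apply: nearW => x i.
apply: filterS2 IH (FQ n) => x Qlt Qn i; rewrite ltnS leq_eqVlt.
by case/orP => [/eqP -> //|]; apply: Qlt.
Qed.

Unset Implicit Arguments. Set Strict Implicit.

Theorem lemma5 (d : measure_display) (T : measurableType d) (R : realType)
  (P : probability T R) (U : nat -> {RV P >-> R})
  (beta x0 : R) (eta : R -> R) :
  mutually_independent P (fun n => U n) ->
  identically_distributed P (fun n => U n) ->
  (forall n, {ae P, forall w, 0 < U n w}) ->
  ('E_P[fun w => (U 0%N w ^+ 2)%R] < +oo)%E ->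
  0 < beta < 1 / 2 ->
  0 < x0 -> in_interior_support P (U 0%N) x0 ->
  convex_on_halfline (fun x => tail P (U 0%N) x `^ (1 / 2 - beta)) x0 ->
  (forall x y, 0 <= x -> x <= y -> eta y <= eta x) ->
  eta x @[x --> +oo] --> 0 ->
  let V N (w : T) (k : nat) := ordstat N (fun i => U i w) k.-1 in
  (* B_N = { V_N / sqrt N <= eta N } *)
  let B N := [set w | V N w N / Num.sqrt N%:R <= eta N%:R] in
  let EU := fine 'E_P[U 0%N] in
  (* E_N(V) = 1/N sum_{i=1}^{N-1} V_i V_{N-1} / (V_{N-1} + V_i) *)
  let EN N w := N%:R^-1 * \sum_(1 <= i < N)
       (V N w i * V N w N.-1 / (V N w N.-1 + V N w i)) in
  let C N := [set w | EU / 4 <= EN N w <= 2 * EU] in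
  (P (B N)) @[N --> \oo] --> 1%E ->
  \forall N \near \oo, {ae P, forall w, B N w -> C N w ->
     cond_exp_Z (fun i : 'I_N => V N w i.+1) <=
       \sum_(1 <= i < N) (V N w N.-1 / (V N w N.-1 + V N w i))
       + Num.sqrt (8 * EU * (N%:R * ln N%:R / V N w N.-1))}.
Proof.
move=> _ _ U_gt0 _ _ _ _ _ _ eta0 V B EU EN C _.
have {}U_gt0 := near_forall_ltn (ae_filter_ringOfSetsType P) U_gt0.
have N_gt1 := nbhs_infty_gt 1%N.
have [EU_le0|EU_gt0] := leP EU 0.
  apply: filterS N_gt1 => N N1; apply: filterS (U_gt0 N) => w Uw _ /andP[_ CN].
  have V_gt0 k : (0 < k < N)%N -> 0 < V N w k.
    by case/andP=> _ kN; apply: ordstat_gt0 Uw (leq_ltn_trans (leq_pred k) kN).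
  have := pair_mean_gt0 N1 V_gt0; rewrite -/(EN N w); lra.
have eta_le1 : \forall N \near \oo, eta N%:R <= 1.
  have [M [_ M_eta]] := cvgr_lt 0 eta0 1 ltr01.
  apply: filterS (nbhs_infty_ger (M + 1)) => N NM; apply/ltW/M_eta.
  by apply: lt_le_trans NM; rewrite ltrDl.
have EU8_gt0 : 0 < EU / 8 by lra.
apply: filterS3 (near_ln_le_sqrt EU8_gt0) eta_le1 N_gt1 => N lnN etaN N1.
apply: filterS (U_gt0 N) => w Uw BN /andP[_ CN].
apply: ordstat_cond_exp_Z_le => //.
have sqN : 0 < Num.sqrt N%:R :> R by rewrite sqrtr_gt0 ltr0n (ltn_trans _ N1).
apply: le_trans (_ : _ <= eta N%:R * Num.sqrt N%:R) _; first by rewrite -ler_pdivrMr.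
by rewrite -[X in _ <= X]mul1r ler_pM2r.
Qed.
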